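(* Let $\mathcal{V}$ be a variety and let $e$ be a unary term of $\mathcal{V}$ with $\mathcal{V}\models e(e(x))=e(x)$. Let $\mathcal{S}$ be the full subcategory of $\mathcal{V}$ whose objects are the algebras in $\mathcal{V}$ separated by $e$, and let $\mathcal{D}$ be the full subcategory of $\mathcal{S}$ whose objects are the algebras in $\mathcal{S}$ for which $e$ is dense. Then: (1) $e(\mathcal{D})=e(\mathcal{S})$ (where $e(\mathcal{K})=\{e(\mathbf{A}):\mathbf{A}\in\mathcal{K}\}$), and this class is a prevariety (closed under isomorphic images, subalgebras and products); (2) the localization functor $e$ (sending $\mathbf{A}\mapsto e(\mathbf{A})$ and a homomorphism $\varphi:\mathbf{B}\to\mathbf{C}$ to $\varphi|_{e(B)}:e(\mathbf{B})\to e(\mathbf{C})$) is a categorical equivalence from $\mathcal{D}$ to the full category on $e(\mathcal{D})$.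
   Context: For an algebra $\mathbf{A}$ and a unary term $e$ with $\mathbf{A}\models e(e(x))=e(x)$, the localization $e(\mathbf{A})$ is the algebra with universe $e(A)$ whose fundamental operation symbols are the symbols $et$, one for each term $t$ in the language of $\mathbf{A}$, where $et$ is interpreted as the restriction to $e(A)$ of the term operation $e(t(x_1,\dots,x_n))$ of $\mathbf{A}$. The term $e$ separates $\mathbf{A}$ if for all $a\neq b$ in $A$ there is a unary term $g$ with $e(g(a))\neq e(g(b))$. The term $e$ is dense for $\mathbf{A}$ if $\mathbf{A}$ is generated by $e(A)$. *)

From mathcomp Require Import ssreflect ssrfun ssrbool eqtype ssrnat fintype.
Set Implicit Arguments.
Unset Strict Implicit.
Unset Printing Implicit Defensive.

Record signature := Signature { sym : Type; ar : sym -> nat }.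

Inductive term (S : signature) (X : Type) : Type :=
| Var : X -> term S X
| App : forall f : sym S, ('I_(ar f) -> term S X) -> term S X.
Arguments Var {S X} x.
Arguments App {S X} f args.

Record algebra (S : signature) := Algebra {
  carrier :> Type;
  op : forall f : sym S, ('I_(ar f) -> carrier) -> carrier }.
Arguments op {S} a f _ : rename.

Fixpoint eval (S : signature) (A : algebra S) (X : Type) (env : X -> A)
  (t : term S X) : A :=
  match t with
  | Var x => env x
  | App f args => op A f (fun i => @eval S A X env (args i))
  end.
Arguments eval {S} A {X} env t.

Definition is_hom (S : signature) (A B : algebra S) (h : A -> B) : Prop :=
  forall (f : sym S) (args : 'I_(ar f) -> A), h (op A f args) = op B f (fun i => h (args i)).

Definition bijective_fun (X Y : Type) (h : X -> Y) : Prop :=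
  (forall x y, h x = h y -> x = y) /\ (forall y, exists x, h x = y).

Definition isomorphic (S : signature) (A B : algebra S) : Prop :=
  exists h : A -> B, is_hom h /\ bijective_fun h.

Definition subuniverse (S : signature) (A : algebra S) (X : A -> Prop) : Prop :=
  forall (f : sym S) (args : 'I_(ar f) -> A), (forall i, X (args i)) -> X (op A f args).

Definition subalg (S : signature) (A : algebra S) (X : A -> Prop)
  (HX : subuniverse X) : algebra S :=
  @Algebra S {x : A | X x}
    (fun f args => exist _ (op A f (fun i => proj1_sig (args i)))
                           (HX f _ (fun i => proj2_sig (args i)))).

Definition prod_alg (S : signature) (I : Type) (B : I -> algebra S) : algebra S :=
  @Algebra S (forall i : I, B i) (fun f args => fun i => op (B i) f (fun k => args k i)).

Definition closed_I (S : signature) (K : algebra S -> Prop) : Prop :=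
  forall A B : algebra S, K A -> isomorphic A B -> K B.
Definition closed_S (S : signature) (K : algebra S -> Prop) : Prop :=
  forall (A : algebra S) (X : A -> Prop) (HX : subuniverse X), K A -> K (subalg HX).
Definition closed_P (S : signature) (K : algebra S -> Prop) : Prop :=
  forall (I : Type) (B : I -> algebra S), (forall i, K (B i)) -> K (prod_alg B).
Definition prevariety (S : signature) (K : algebra S -> Prop) : Prop :=
  closed_I K /\ closed_S K /\ closed_P K.

Definition models (S : signature) (E : term S nat -> term S nat -> Prop)
  (A : algebra S) : Prop :=
  forall l r, E l r -> forall env : nat -> A, eval A env l = eval A env r.

Section Loc.
Variables (S : signature) (e : term S 'I_1).

Definition eA (A : algebra S) (a : A) : A := eval A (fun _ => a) e.

(* The signature of e(A): one symbol "e t" for each term t, with arity n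
   when t is a term in variables x_1..x_n (encoded as 'I_n). *)
Definition loc_sig : signature :=
  @Signature {n : nat & term S 'I_n} (fun s => projT1 s).

Definition loc_carrier (A : algebra S) : Type := {x : A | exists a, x = eA a}.

Definition loc (A : algebra S) : algebra loc_sig :=
  @Algebra loc_sig (loc_carrier A)
    (fun s args =>
       exist _ (eA (eval A (fun i => proj1_sig (args i)) (projT2 s)))
         (ex_intro _ _ erefl)).

Definition separates (A : algebra S) : Prop :=
  forall a b : A, a <> b ->
    exists g : term S 'I_1, eA (eval A (fun _ => a) g) <> eA (eval A (fun _ => b) g).

(* e is dense for A: A is generated by e(A), i.e. the smallest subuniverse
   containing e(A) is all of A *)
Definition dense (A : algebra S) : Prop :=
  forall X : A -> Prop, subuniverse X -> (forall a, X (eA a)) -> forall x, X x.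

Definition loc_class (K : algebra S -> Prop) : algebra loc_sig -> Prop :=
  fun B => exists A, K A /\ isomorphic B (loc A).
End Loc.

(* An element of the subalgebra <P> of A generated by P, a subset of e(A), is a
   term t evaluated at finitely many points of P, and e(t(xs)) is the value at xs
   of the fundamental operation et of e(A).  Hence e(<P>) is isomorphic to P
   when P is a subuniverse of e(A): subalgebras of localizations are
   localizations, e(A) is the localization of the dense algebra <e(A)>, and
   e commutes with products.  A homomorphism f : e(A) -> e(B) extends to A by
   t(xs) |-> t(f xs); this is well defined when e separates B, since for every
   unary g, e(g(t(f xs))) = f(e(g(t(xs)))).  Density of e for A makes extensions
   of homomorphisms unique. *)

From mathcomp Require Import ssreflect ssrfun ssrbool eqtype ssrnat fintype.
From Stdlib Require Import Classical ClassicalEpsilon FunctionalExtensionality ProofIrrelevance.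
Set Implicit Arguments.
Unset Strict Implicit.

Lemma proj1_sig_inj (T : Type) (P : T -> Prop) (x y : {a | P a}) :
  proj1_sig x = proj1_sig y -> x = y.
Proof. by apply: eq_sig_hprop => a; exact: proof_irrelevance. Qed.

Section Algebras.
Variable S : signature.

Fixpoint rename X Y (r : X -> Y) (t : term S X) : term S Y :=
  match t with Var x => Var (r x) | App f args => App f (fun i => rename r (args i)) end.

Fixpoint subst X Y (s : X -> term S Y) (t : term S X) : term S Y :=
  match t with Var x => s x | App f args => App f (fun i => subst s (args i)) end.

Lemma eval_rename (A : algebra S) X Y (r : X -> Y) (env : Y -> A) t :
  eval A env (rename r t) = eval A (fun x => env (r x)) t.
Proof.
elim: t => //= f args IH; congr (op A f).
by apply: functional_extensionality => i; exact: IH.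
Qed.

Lemma eval_subst (A : algebra S) X Y (s : X -> term S Y) (env : Y -> A) t :
  eval A env (subst s t) = eval A (fun x => eval A env (s x)) t.
Proof.
elim: t => //= f args IH; congr (op A f).
by apply: functional_extensionality => i; exact: IH.
Qed.

Lemma eval_hom (A B : algebra S) (h : A -> B) X (env : X -> A) t :
  is_hom h -> h (eval A env t) = eval B (fun x => h (env x)) t.
Proof.
move=> hom_h; elim: t => //= f args IH; rewrite hom_h; congr (op B f).
by apply: functional_extensionality => i; exact: IH.
Qed.

Lemma eval_subalg (A : algebra S) (P : A -> Prop) (HP : subuniverse P) X
    (env : X -> subalg HP) t :
  proj1_sig (eval (subalg HP) env t) = eval A (fun x => proj1_sig (env x)) t.
Proof.
elim: t => //= f args IH; congr (op A f).
by apply: functional_extensionality => i; exact: IH.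
Qed.

Lemma eval_prod I (A : I -> algebra S) X (env : X -> prod_alg A) t i :
  eval (prod_alg A) env t i = eval (A i) (fun x => env x i) t.
Proof.
elim: t => //= f args IH; congr (op (A i) f).
by apply: functional_extensionality => k; exact: IH.
Qed.

Lemma subuniverse_eval (A : algebra S) (P : A -> Prop) X (env : X -> A) t :
  subuniverse P -> (forall x, P (env x)) -> P (eval A env t).
Proof. by move=> HP Penv; elim: t => //= f args IH; exact: HP. Qed.

Lemma isomorphic_trans (A B C : algebra S) :
  isomorphic A B -> isomorphic B C -> isomorphic A C.
Proof.
move=> [h [hom_h [inj_h surj_h]]] [g [hom_g [inj_g surj_g]]].
exists (fun x => g (h x)); split; first by move=> f args; rewrite hom_h hom_g.
split; first by move=> x y /inj_g /inj_h.
by move=> z; case: (surj_g z) => y <-; case: (surj_h y) => x <-; exists x.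
Qed.

Lemma isomorphic_sym (A B : algebra S) : isomorphic A B -> isomorphic B A.
Proof.
move=> [h [hom_h [inj_h surj_h]]].
pose g y := proj1_sig (constructive_indefinite_description _ (surj_h y)).
have hK y : h (g y) = y by rewrite /g; case: constructive_indefinite_description.
exists g; split.
  move=> f args; apply: inj_h; rewrite hom_h hK; congr (op B f).
  by apply: functional_extensionality => i; rewrite hK.
split; first by move=> x y E; rewrite -(hK x) -(hK y) E.
by move=> x; exists (h x); apply: inj_h; rewrite hK.
Qed.

Lemma isomorphic_subalg_full (A : algebra S) (HT : subuniverse (fun _ : A => True)) :
  isomorphic A (subalg HT).
Proof.
exists (fun a => exist _ a I); split; first by move=> f args; exact: proj1_sig_inj.
split; first by move=> x y /(f_equal (@proj1_sig _ _)).
by move=> [a []]; exists a.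
Qed.

Lemma subuniverse_preimage (A B : algebra S) (g : A -> B) (X : B -> Prop) :
  is_hom g -> subuniverse X -> subuniverse (fun a => X (g a)).
Proof. by move=> hom_g HX f args Xargs /=; rewrite hom_g; exact: HX. Qed.

Lemma isomorphic_subalg_preimage (A B : algebra S) (g : A -> B) (X : B -> Prop)
    (HX : subuniverse X) (HY : subuniverse (fun a => X (g a))) :
  is_hom g -> bijective_fun g -> isomorphic (subalg HY) (subalg HX).
Proof.
move=> hom_g [inj_g surj_g].
exists (fun y : subalg HY => exist _ (g (proj1_sig y)) (proj2_sig y) : subalg HX); split.
  by move=> f args; apply: proj1_sig_inj; rewrite /= hom_g.
split; first by move=> x y /(f_equal (@proj1_sig _ _)) /inj_g /proj1_sig_inj.
move=> [b Xb]; case: (surj_g b) => a Ea; subst b.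
by exists (exist _ a Xb); exact: proj1_sig_inj.
Qed.

Lemma isomorphic_prod I (A B : I -> algebra S) :
  (forall i, isomorphic (A i) (B i)) -> isomorphic (prod_alg A) (prod_alg B).
Proof.
move=> isoAB.
pose h i := proj1_sig (constructive_indefinite_description _ (isoAB i)).
have spec i : is_hom (h i) /\ bijective_fun (h i).
  by rewrite /h; case: constructive_indefinite_description.
exists (fun x : prod_alg A => (fun i => h i (x i)) : prod_alg B); split.
  move=> f args; apply: functional_extensionality_dep => i.
  by rewrite /= (proj1 (spec i)).
split.
  move=> x y E; apply: functional_extensionality_dep => i.
  by apply: (proj1 (proj2 (spec i))); exact: (f_equal (fun z => z i) E).
move=> y.
pose x i := proj1_sig (constructive_indefinite_description _ (proj2 (proj2 (spec i)) (y i))).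
exists x; apply: functional_extensionality_dep => i.
by rewrite /x; case: constructive_indefinite_description.
Qed.

Section Separation.
Variable e : term S 'I_1.

Lemma eA_subalg (A : algebra S) (P : A -> Prop) (HP : subuniverse P) (a : subalg HP) :
  proj1_sig (eA e a) = eA e (proj1_sig a).
Proof. exact: eval_subalg. Qed.

Lemma eA_prod I (A : I -> algebra S) (x : prod_alg A) i : eA e x i = eA e (x i).
Proof. exact: eval_prod. Qed.

Lemma models_subalg E (A : algebra S) (P : A -> Prop) (HP : subuniverse P) :
  models E A -> models E (subalg HP).
Proof. by move=> mA l r lr env; apply: proj1_sig_inj; rewrite !eval_subalg; exact: mA. Qed.

Lemma models_prod E I (A : I -> algebra S) :
  (forall i, models E (A i)) -> models E (prod_alg A).
Proof.
move=> mA l r lr env; apply: functional_extensionality_dep => i.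
by rewrite !eval_prod; exact: mA.
Qed.

Lemma separates_subalg (A : algebra S) (P : A -> Prop) (HP : subuniverse P) :
  separates e A -> separates e (subalg HP).
Proof.
move=> sepA a b ab.
have [|g Hg] := sepA (proj1_sig a) (proj1_sig b); first by move/proj1_sig_inj.
exists g => /(f_equal (@proj1_sig _ _)); rewrite !eA_subalg !eval_subalg; exact: Hg.
Qed.

Lemma separates_prod I (A : I -> algebra S) :
  (forall i, separates e (A i)) -> separates e (prod_alg A).
Proof.
move=> sepA a b ab.
have [i abi] : exists i, a i <> b i.
  apply: NNPP => eq_ab; apply: ab; apply: functional_extensionality_dep => i.
  by apply: NNPP => abi; apply: eq_ab; exists i.
have [g Hg] := sepA i _ _ abi; exists g => /(f_equal (fun z => z i)).
by rewrite !eA_prod !eval_prod; exact: Hg.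
Qed.

End Separation.
End Algebras.

Section Localization.
Variables (S : signature) (e : term S 'I_1).

Definition loc_of (A : algebra S) (a : A) : loc e A := exist _ (eA e a) (ex_intro _ a erefl).

Lemma loc_of_eval (A : algebra S) (V : finType) (t : term S V) (xs : V -> loc e A) :
  loc_of (eval A (fun v => proj1_sig (xs v)) t)
  = op (loc e A) (existT (fun n => term S 'I_n) #|V| (rename enum_rank t))
       (fun j => xs (enum_val j)).
Proof.
apply: proj1_sig_inj; rewrite /= eval_rename; do 2 f_equal.
by apply: functional_extensionality => v; rewrite enum_rankK.
Qed.

Lemma hom_loc_of_eval (A B : algebra S) (f : loc e A -> loc e B) (V : finType)
    (t : term S V) (xs : V -> loc e A) :
  is_hom f ->
  f (loc_of (eval A (fun v => proj1_sig (xs v)) t))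
  = loc_of (eval B (fun v => proj1_sig (f (xs v))) t).
Proof. by move=> hom_f; rewrite !loc_of_eval hom_f. Qed.

Lemma subuniverse_loc_of_eval (A : algebra S) (P : loc e A -> Prop) (V : finType)
    (t : term S V) (xs : V -> loc e A) :
  subuniverse P -> (forall v, P (xs v)) -> P (loc_of (eval A (fun v => proj1_sig (xs v)) t)).
Proof. by move=> HP Pxs; rewrite loc_of_eval; apply: HP. Qed.

(* Membership in the subalgebra generated by a part of e(A), witnessed by a term
   over an arbitrary finite variable type; [loc_of_eval] converts it to the
   ['I_n]-indexed symbols of [loc_sig]. *)
Record loc_rep (A : algebra S) (a : A) := LocRep {
  rep_vars : finType;
  rep_term : term S rep_vars;
  rep_env : rep_vars -> loc e A;
  rep_evalE : eval A (fun v => proj1_sig (rep_env v)) rep_term = a }.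
Arguments rep_env {A a} l v.

Definition loc_rep_var (A : algebra S) (x : loc e A) : loc_rep (proj1_sig x) :=
  @LocRep A _ unit (Var tt) (fun _ => x) erefl.

Definition loc_rep_App (A : algebra S) (f : sym S) (args : 'I_(ar f) -> A)
    (r : forall i, loc_rep (args i)) : loc_rep (op A f args).
Proof.
pose V : finType := {i : 'I_(ar f) & rep_vars (r i)}.
exists V (App f (fun i => rename (fun v => existT _ i v : V) (rep_term (r i))))
  (fun w => rep_env (r (tag w)) (tagged w)).
rewrite /=; congr (op A f); apply: functional_extensionality => i.
by rewrite eval_rename rep_evalE.
Defined.

Definition generated (A : algebra S) (P : loc e A -> Prop) (a : A) : Prop :=
  exists r : loc_rep a, forall v, P (rep_env r v).

Lemma generated_loc (A : algebra S) (P : loc e A -> Prop) (x : loc e A) :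
  P x -> generated P (proj1_sig x).
Proof. by move=> Px; exists (loc_rep_var x). Qed.

Lemma generated_subuniverse (A : algebra S) (P : loc e A -> Prop) :
  subuniverse (generated P).
Proof.
move=> f args gen.
pose r i := proj1_sig (constructive_indefinite_description _ (gen i)).
exists (loc_rep_App r) => -[i v].
exact: (proj2_sig (constructive_indefinite_description _ (gen i)) v).
Qed.

(* The implicit arguments would otherwise be computed on the unfolded [subuniverse]. *)
#[global] Arguments generated_subuniverse {A} P.

Lemma loc_of_generated (A : algebra S) (P : loc e A -> Prop) (a : A) :
  subuniverse P -> generated P a -> P (loc_of a).
Proof. by move=> HP [[V t xs Ea] /= Pxs]; rewrite -Ea; exact: subuniverse_loc_of_eval. Qed.

Lemma dense_generated (A : algebra S) (a : A) :
  dense e A -> generated (fun _ : loc e A => True) a.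
Proof.
move=> dA; apply: (dA _ (generated_subuniverse _)) => b.
exact: (generated_loc (x := loc_of b)).
Qed.

Section Idempotent.
Variable A : algebra S.
Hypothesis eA_idem : forall a : A, eA e (eA e a) = eA e a.

Lemma eA_loc (x : loc e A) : eA e (proj1_sig x) = proj1_sig x.
Proof. by case: x => y /= [a Ea]; rewrite Ea. Qed.

Lemma generated_dense (P : loc e A -> Prop) : dense e (subalg (generated_subuniverse P)).
Proof.
move=> X HX XeA x; have [[V t xs Ex] /= Pxs] := proj2_sig x.
pose env v : subalg (generated_subuniverse P) := exist _ _ (generated_loc (Pxs v)).
have -> : x = eval _ env t by apply: proj1_sig_inj; rewrite eval_subalg -Ex.
apply: subuniverse_eval HX _ => v.
have -> : env v = eA e (env v) by apply: proj1_sig_inj; rewrite eA_subalg eA_loc.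
exact: XeA.
Qed.

Lemma loc_generated_iso (P : loc e A -> Prop) (HP : subuniverse P) :
  isomorphic (subalg HP) (loc e (subalg (generated_subuniverse P))).
Proof.
pose gen x : subalg (generated_subuniverse P) := exist _ _ (generated_loc (proj2_sig x)).
have gen_fixed x : exists b, gen x = eA e b.
  by exists (gen x); apply: proj1_sig_inj; rewrite eA_subalg eA_loc.
exists (fun x => exist _ (gen x) (gen_fixed x)); split; [|split].
- move=> s args; do 2 apply: proj1_sig_inj.
  by rewrite /= eA_subalg eval_subalg.
- move=> x y /(f_equal (fun z => proj1_sig (proj1_sig z))) /= /proj1_sig_inj.
  exact: proj1_sig_inj.
- move=> [[y gy] [[b gb] Eb]].
  exists (exist _ (loc_of b) (loc_of_generated HP gb)); do 2 apply: proj1_sig_inj.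
  by move: (f_equal (@proj1_sig _ _) Eb); rewrite eA_subalg /= => ->.
Qed.

End Idempotent.

Lemma loc_prod_iso I (A : I -> algebra S) :
  (forall i (a : A i), eA e (eA e a) = eA e a) ->
  isomorphic (prod_alg (fun i => loc e (A i))) (loc e (prod_alg A)).
Proof.
move=> eA_idem.
have fixed (z : prod_alg (fun i => loc e (A i))) :
    exists a : prod_alg A, (fun i => proj1_sig (z i)) = eA e a.
  exists (fun i => proj1_sig (z i)); apply: functional_extensionality_dep => i.
  by rewrite eA_prod eA_loc.
exists (fun z => exist _ _ (fixed z) : loc e (prod_alg A)); split; [|split].
- move=> s args; apply: proj1_sig_inj; apply: functional_extensionality_dep => i.
  by rewrite /= eA_prod eval_prod.
- move=> x y /(f_equal (fun z => proj1_sig z)) /= Exy.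
  apply: functional_extensionality_dep => i; apply: proj1_sig_inj.
  exact: (f_equal (fun z => z i) Exy).
- move=> [x [a Ea]].
  have fixed_i i : exists b, x i = eA e b by exists (a i); rewrite Ea eA_prod.
  by exists (fun i => exist _ (x i) (fixed_i i)); exact: proj1_sig_inj.
Qed.

Lemma restrict_hom_loc (A B : algebra S) (phi : A -> B) :
  is_hom phi ->
  exists f : loc e A -> loc e B,
    is_hom f /\ forall x : loc e A, proj1_sig (f x) = phi (proj1_sig x).
Proof.
move=> hom_phi.
have fixed (x : loc e A) : exists b, phi (proj1_sig x) = eA e b.
  by case: x => y /= [a Ea]; exists (phi a); rewrite Ea /eA eval_hom.
exists (fun x => exist _ (phi (proj1_sig x)) (fixed x) : loc e B); split => // s args.
by apply: proj1_sig_inj; rewrite /= /eA !eval_hom.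
Qed.

Lemma dense_hom_eq (A B : algebra S) (phi psi : A -> B) :
  dense e A -> is_hom phi -> is_hom psi ->
  (forall x : loc e A, phi (proj1_sig x) = psi (proj1_sig x)) -> forall a, phi a = psi a.
Proof.
move=> dA hom_phi hom_psi eq_loc; apply: (dA (fun a => phi a = psi a)).
  move=> f args eq_args; rewrite hom_phi hom_psi; congr (op B f).
  exact: functional_extensionality.
by move=> a; exact: (eq_loc (loc_of a)).
Qed.

Lemma loc_hom_eval_congr (A B : algebra S) (f : loc e A -> loc e B) (V W : finType)
    (t : term S V) (s : term S W) (xs : V -> loc e A) (ys : W -> loc e A) :
  separates e B -> is_hom f ->
  eval A (fun v => proj1_sig (xs v)) t = eval A (fun w => proj1_sig (ys w)) s ->
  eval B (fun v => proj1_sig (f (xs v))) t = eval B (fun w => proj1_sig (f (ys w))) s.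
Proof.
move=> sepB hom_f eq_ts; apply: NNPP => /sepB [g]; apply.
have unary_image (U : finType) (u : term S U) (zs : U -> loc e A) :
    eA e (eval B (fun _ => eval B (fun v => proj1_sig (f (zs v))) u) g)
    = proj1_sig (f (loc_of (eval A (fun _ => eval A (fun v => proj1_sig (zs v)) u) g))).
  rewrite -(eval_subst (fun _ => u)) -(eval_subst (fun _ => u) (fun v => proj1_sig (zs v))).
  by rewrite hom_loc_of_eval.
by rewrite !unary_image eq_ts.
Qed.

Lemma extend_hom_loc (A B : algebra S) (f : loc e A -> loc e B) :
  dense e A -> separates e B -> is_hom f ->
  exists phi : A -> B,
    is_hom phi /\ forall x : loc e A, phi (proj1_sig x) = proj1_sig (f x).
Proof.
move=> dA sepB hom_f.
pose r a : loc_rep a :=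
  proj1_sig (constructive_indefinite_description _ (dense_generated a dA)).
pose image a (ra : loc_rep a) :=
  eval B (fun v => proj1_sig (f (rep_env ra v))) (rep_term ra).
have image_rep a (ra ra' : loc_rep a) : image a ra = image a ra'.
  by apply: loc_hom_eval_congr; rewrite // !rep_evalE.
exists (fun a => image a (r a)); split.
- move=> g args; rewrite (image_rep _ _ (loc_rep_App (fun i => r (args i)))).
  by congr (op B g); apply: functional_extensionality => i; exact: eval_rename.
- by move=> x; rewrite (image_rep _ _ (loc_rep_var x)).
Qed.

End Localization.

Section LocalizedClass.
Variables (S : signature) (e : term S 'I_1) (K : algebra S -> Prop).
Hypothesis K_idem : forall A, K A -> forall a : A, eA e (eA e a) = eA e a.

Lemma loc_class_closed_I : closed_I (loc_class e K).
Proof.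
move=> B C [A [KA isoB]] isoBC; exists A; split => //.
exact: isomorphic_trans (isomorphic_sym isoBC) isoB.
Qed.

Lemma loc_class_closed_S : closed_S K -> closed_S (loc_class e K).
Proof.
move=> K_S B X HX [A [KA isoB]].
have [g [hom_g bij_g]] := isomorphic_sym isoB.
have HY := subuniverse_preimage hom_g HX.
exists (subalg (generated_subuniverse (fun x => X (g x)))); split; first exact: K_S.
apply: isomorphic_trans (isomorphic_sym (isomorphic_subalg_preimage HX HY hom_g bij_g)) _.
exact (loc_generated_iso (K_idem KA) HY).
Qed.

Lemma loc_class_closed_P : closed_P K -> closed_P (loc_class e K).
Proof.
move=> K_P I B KB.
pose A i := proj1_sig (constructive_indefinite_description _ (KB i)).
have spec i : K (A i) /\ isomorphic (B i) (loc e (A i)).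
  by rewrite /A; case: constructive_indefinite_description.
exists (prod_alg A); split; first by apply: K_P => i; case: (spec i).
apply: isomorphic_trans (isomorphic_prod (fun i => proj2 (spec i))) _.
by apply: loc_prod_iso => i; apply: K_idem; case: (spec i).
Qed.

Lemma loc_class_dense (B : algebra (loc_sig S)) :
  closed_S K -> loc_class e K B -> loc_class e (fun A => K A /\ dense e A) B.
Proof.
move=> K_S [A [KA isoB]].
have HT : subuniverse (fun _ : loc e A => True) by [].
exists (subalg (generated_subuniverse (fun _ : loc e A => True))); split.
  by split; [exact: K_S | exact: generated_dense (K_idem KA) _].
apply: isomorphic_trans isoB _; apply: isomorphic_trans (isomorphic_subalg_full HT) _.
exact (loc_generated_iso (K_idem KA) HT).
Qed.

End LocalizedClass.

Lemma closed_S_separated_models (S : signature) E (e : term S 'I_1) :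
  closed_S (fun A => models E A /\ separates e A).
Proof. by move=> A X HX [mA sA]; split; [exact: models_subalg | exact: separates_subalg]. Qed.

Lemma closed_P_separated_models (S : signature) E (e : term S 'I_1) :
  closed_P (fun A => models E A /\ separates e A).
Proof.
move=> I A sepA; split; first by apply: models_prod => i; case: (sepA i).
by apply: separates_prod => i; case: (sepA i).
Qed.

Theorem theorem2p3 (S : signature) (E : term S nat -> term S nat -> Prop)
  (e : term S 'I_1)
  (he : forall A : algebra S, models E A -> forall a : A, eA e (eA e a) = eA e a) :
  let SS := fun A : algebra S => models E A /\ separates e A in
  let DD := fun A : algebra S => SS A /\ dense e A in
  (* (1) *)
  ((forall B, loc_class e DD B <-> loc_class e SS B) /\ prevariety (loc_class e SS)) /\
  (* (2) the localization functor D -> e(D) is an equivalence *)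
  ((* well-defined on morphisms: phi restricts to a hom e(A) -> e(B) *)
   (forall (A B : algebra S), DD A -> DD B -> forall phi : A -> B, is_hom phi ->
      exists f : loc e A -> loc e B, is_hom f /\
        forall x : loc e A, proj1_sig (f x) = phi (proj1_sig x)) /\
   (* faithful *)
   (forall (A B : algebra S), DD A -> DD B -> forall phi psi : A -> B,
      is_hom phi -> is_hom psi ->
      (forall x : loc e A, phi (proj1_sig x) = psi (proj1_sig x)) ->
      forall a, phi a = psi a) /\
   (* full *)
   (forall (A B : algebra S), DD A -> DD B -> forall f : loc e A -> loc e B,
      is_hom f -> exists phi : A -> B, is_hom phi /\
        forall x : loc e A, phi (proj1_sig x) = proj1_sig (f x)) /\
   (* essentially surjective onto e(D) *)
   (forall C, loc_class e DD C -> exists A, DD A /\ isomorphic C (loc e A))).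
Proof.
move=> SS DD.
have SS_idem A : SS A -> forall a : A, eA e (eA e a) = eA e a by case=> /he.
have SS_S : closed_S SS by exact: closed_S_separated_models.
split; first split.
- move=> B; split; first by case=> A [[SA _] isoB]; exists A.
  exact: loc_class_dense.
- split; first exact: loc_class_closed_I.
  split; first exact: loc_class_closed_S.
  by apply: loc_class_closed_P => //; exact: closed_P_separated_models.
split; first by move=> A B _ _; exact: restrict_hom_loc.
split; first by move=> A B [_ dA] _ phi psi; exact: dense_hom_eq.
split; first by move=> A B [_ dA] [[_ sepB] _] f; exact: extend_hom_loc.
by move=> C [A [DA isoC]]; exists A.
Qed.
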